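(* Consider an $L$-layer network in which, at every layer $i=l,\dots,L$, the activation $X_i$ is passed through a signed $B$-bit clipped quantizer $\mathbb{Q}_i$ with clipping scalar $s_i$ satisfying $\Pr(|X_i|>s_i)>0$. Let $\Delta X_l$ be the true gradient of the loss with respect to $X_l$ and $\Delta^{(\mathrm{STE})}X_l$ its estimate when each $\partial\mathbb{Q}_i(x)/\partial x$ is replaced by the straight-through estimate $1$. Then there exists $\delta>0$ such that $$\frac{\mathrm{Var}\left(\Delta^{(\mathrm{STE})}X_l\right)}{\mathrm{Var}\left(\Delta X_l\right)}\ge(1+\delta)^{L-l}.$$
   Context: The clipped quantizer is $\mathbb{Q}(x)=\mathrm{clip}\big(s\cdot2^{1-B}\,\mathrm{round}(x\,2^{B-1}/s),-s,s\big)$, i.e. equal to $-s$ for $x<-s$, to $s$ for $x>s$, and to the nearest of the equally spaced levels in between otherwise. Its true derivative is taken to be $1$ on the discretization region $|x|\le s$ (small step approximation) and $0$ on the clipping region $|x|>s$. Gradient variances are computed in a second-order back-propagation model: the variance of the back-propagated gradient at layer $l$ equals a common factor times $\prod_{i=l}^{L}\mathbb{E}\big[|g_i(X_i)|^2\big]$, where $g_i$ is the derivative (true or estimated) used for the quantizer at layer $i$. *)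

From HB Require Import structures.
From mathcomp Require Import all_boot all_order all_algebra.
From mathcomp Require Import all_classical all_reals all_analysis.
Set Implicit Arguments. Unset Strict Implicit. Unset Printing Implicit Defensive.
Import Order.TTheory GRing.Theory Num.Theory.
Local Open Scope ring_scope.

(* Signed B-bit clipped quantizer with clipping scalar s:
   Q(x) = clip(s 2^(1-B) round(x 2^(B-1)/s), -s, s), round y := floor(y + 1/2).
   (Included for documentation; the second-order model only uses its derivative.) *)
Definition clipq {R : realType} (B : nat) (s x : R) : R :=
  let y := s / 2 ^+ B.-1 * (Num.floor (x * 2 ^+ B.-1 / s + 2^-1))%:~R in
  Num.max (- s) (Num.min s y).

(* True derivative of the clipped quantizer (small step approximation):
   1 on the discretization region |x| <= s, 0 on the clipping region |x| > s. *)
Definition dQ_true {R : realType} (s : R) (x : R) : R :=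
  if `|x| <= s then 1 else 0.

Definition dQ_ste {R : realType} (s : R) (x : R) : R := 1.

Definition sqmoment {d} {T : measurableType d} {R : realType}
  (P : probability T R) (g : R -> R) (X : T -> R) : R :=
  fine ('E_P[fun w => (`|g (X w)| ^+ 2)%R])%E.

(* Second-order back-propagation model: the variance of the back-propagated
   gradient at layer l is  C * prod_{i=l}^{L} E[|g_i(X_i)|^2],
   where at layer i the quantizer derivative is  dQ s_i. *)
Definition grad_var {d} {T : measurableType d} {R : realType}
  (P : probability T R) (C : R) (dQ : R -> R -> R) (s : nat -> R)
  (X : nat -> T -> R) (l L : nat) : R :=
  C * \prod_(l <= i < L.+1) sqmoment P (dQ (s i)) (X i).

From HB Require Import structures.
From mathcomp Require Import all_boot all_order all_algebra.
From mathcomp Require Import all_classical all_reals all_analysis.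
From mathcomp Require Import measurable_realfun.
Import Order.TTheory GRing.Theory Num.Theory.
Local Open Scope ring_scope.

(* Under the straight-through estimate every factor E|g_i(X_i)|^2 equals 1,
   while under the true derivative it is Pr(|X_i| <= s_i) = 1 - Pr(|X_i| > s_i) < 1.
   The variance ratio is therefore the inverse of a product of L - l + 1 numbers,
   all bounded by their maximum q < 1, hence it is at least q^-(L-l); take
   delta = 1/q - 1. *)

Lemma prodr_le_expr_lt1 (R : realFieldType) (f : nat -> R) (m n : nat) :
  (forall i, (m <= i < n)%N -> 0 <= f i < 1) ->
  exists2 q, 0 < q < 1 & \prod_(m <= i < n) f i <= q ^+ (n - m).
Proof.
move=> f01.
pose q := \big[Num.max/2^-1]_(m <= i < n | (m <= i < n)%N) f i.
have f_le_q i : (m <= i < n)%N -> f i <= q.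
  by move=> mi; apply: le_bigmax_seq => //; rewrite mem_index_iota.
exists q.
  apply/andP; split.
    by apply: (@lt_le_trans _ _ 2^-1); rewrite ?invr_gt0 ?bigmax_ge_id.
  by apply: bigmax_lt => [|i /f01 /andP[]//]; rewrite invf_lt1 ?ltr1n.
rewrite -prodr_const_nat big_seq_cond [X in _ <= X]big_seq_cond.
apply: ler_prod => i; rewrite andbT mem_index_iota => mi.
by rewrite f_le_q // andbT; case/andP: (f01 i mi).
Qed.

Section Moments.
Context d (T : measurableType d) (R : realType) (P : probability T R).
Variables (X : {RV P >-> R}) (s : R).

Lemma measurable_clip_region : measurable [set w | s < `|X w|]%classic.
Proof.
have mnormX := measurableT_comp (@normr_measurable R setT) (measurable_funPT X).
have := measurable_fun_ltr (measurable_cst s) mnormX measurableT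
  (I : measurable [set true]%classic).
by rewrite setTI.
Qed.

Lemma sqmoment_ste : sqmoment P (dQ_ste s) X = 1.
Proof.
rewrite /sqmoment /dQ_ste normr1 expr1n.
by rewrite (_ : (fun _ => _) = cst 1) // expectation_cst.
Qed.

Lemma sqmoment_true :
  sqmoment P (dQ_true s) X = 1 - fine (P [set w | s < `|X w|]%classic).
Proof.
set B := [set w | _]%classic.
have mB : measurable B := measurable_clip_region.
rewrite /sqmoment; set F := (fun w => _).
have -> : F = \1_(~` B)%classic.
  apply/funext => w; rewrite indicE /F /dQ_true.
  have -> : (w \in ~` B)%classic = (`|X w| <= s).
    by apply/idP/idP; rewrite in_setC notin_setE /B /= leNgt => /negP.
  by case: ifP; rewrite ?normr1 ?normr0 ?expr1n ?expr0n.
rewrite expectation_indic; last exact: measurableC.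
by rewrite (probability_setC P mB) -(fineK (fin_num_measure P B mB)).
Qed.

Lemma sqmoment_true_ge0 : 0 <= sqmoment P (dQ_true s) X.
Proof.
have mB := measurable_clip_region.
by rewrite sqmoment_true subr_ge0 -lee_fin fineK ?fin_num_measure ?probability_le1.
Qed.

Lemma sqmoment_true_lt1 :
  (0 < P [set w | (s < `|X w|)%R]%classic)%E -> sqmoment P (dQ_true s) X < 1.
Proof.
have mB := measurable_clip_region.
by move=> P_gt0; rewrite sqmoment_true ltrBlDr ltrDl -lte_fin fineK ?fin_num_measure.
Qed.

End Moments.

Theorem proposition1 (d : measure_display) (T : measurableType d) (R : realType)
  (P : probability T R) (X : nat -> {RV P >-> R}) (s : nat -> R) (C : R)
  (l L : nat) :
  (l <= L)%N ->
  0 < C ->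
  (forall i, (l <= i <= L)%N -> (0 < P [set w : T | (s i < `|X i w|)%R]%classic)%E) ->
  0 < grad_var P C dQ_true s (fun i => X i : T -> R) l L ->
  exists delta : R, 0 < delta /\
    (1 + delta) ^+ (L - l) <=
      grad_var P C dQ_ste s (fun i => X i : T -> R) l L
      / grad_var P C dQ_true s (fun i => X i : T -> R) l L.
Proof.
move=> lL C_gt0 clip_gt0; rewrite /grad_var pmulr_rgt0 // => prod_gt0.
rewrite big1 => [|i _]; last exact: sqmoment_ste.
rewrite mulr1 invfM mulrA mulfV ?gt_eqF // mul1r.
have [q /andP[q_gt0 q_lt1] prod_le] :
    exists2 q, 0 < q < 1 &
      \prod_(l <= i < L.+1) sqmoment P (dQ_true (s i)) (X i) <= q ^+ (L.+1 - l).
  apply: prodr_le_expr_lt1 => i li.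
  by rewrite sqmoment_true_ge0 sqmoment_true_lt1 ?clip_gt0.
exists (q^-1 - 1); split; first by rewrite subr_gt0 invf_gt1.
rewrite addrC subrK exprVn lef_pV2 ?posrE ?exprn_gt0 //.
apply: le_trans prod_le _.
by rewrite subSn // exprS ler_piMl ?exprn_ge0 ?ltW.
Qed.
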